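(* Let $(\xi_n)_{n\geq1}$ be i.i.d. with $\mathbf{P}(\xi_1=1)=p=1-\mathbf{P}(\xi_1=-1)$, $p\in(0,1)$. For $x\geq1$ set $W_0:=x$, $B_1:=1$, $W_n:=W_{n-1}+\xi_nB_n$, $B_{n+1}:=B_n2^{\xi_n}$ for $n\geq1$, and $f(x,p):=\mathbf{P}(W_n\leq0\text{ for some }n)$. Then for each fixed $x>2$, the function $p\mapsto f(x,p)$ is strictly increasing on $(0,1/2)$.
   Context: $f(x,p)$ is the ruin probability of a gambler with initial fortune $x$ who starts by betting $1$, doubles the bet after each win and halves it after each loss, winning each round independently with probability $p$. *)

From HB Require Import structures.
From mathcomp Require Import all_boot all_order all_algebra.
From mathcomp Require Import all_classical all_reals all_analysis.
Set Implicit Arguments. Unset Strict Implicit. Unset Printing Implicit Defensive.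
Import Order.TTheory GRing.Theory Num.Theory.
Local Open Scope classical_set_scope.
Local Open Scope ring_scope.

(* Indexing convention: the sequence s is 0-based, s k stands for xi_(k+1).
   bet_state x s n = (W_n, B_(n+1)), with W_0 = x, B_1 = 1,
   W_n = W_(n-1) + xi_n B_n, B_(n+1) = B_n * 2^(xi_n). *)
Fixpoint bet_state {R : realType} (x : R) (s : nat -> R) (n : nat) : R * R :=
  match n with
  | 0 => (x, 1)
  | k.+1 => let wb := bet_state x s k in
            (wb.1 + s k * wb.2, wb.2 * (2 `^ (s k)))
  end.

Definition wealth {R : realType} (x : R) (s : nat -> R) (n : nat) : R :=
  (bet_state x s n).1.

(* Mutual independence of a sequence of real random variables:
   product rule for every finite family of measurable events
   (the first n variables; taking A i = setT covers every finite subfamily). *)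
Definition mutually_independent {d} {T : measurableType d} {R : realType}
  (P : probability T R) (X : nat -> T -> R) : Prop :=
  forall (n : nat) (A : nat -> set R), (forall i, measurable (A i)) ->
    P (\bigcap_(i in `I_n) (X i @^-1` A i)) =
    (\prod_(i < n) P (X i @^-1` A i))%E.

Definition iid_pm1 {d} {T : measurableType d} {R : realType}
  (P : probability T R) (X : nat -> T -> R) (p : R) : Prop :=
  [/\ forall n, measurable_fun setT (X n),
      mutually_independent P X,
      forall n, P (X n @^-1` [set 1]) = p%:E
    & forall n, P (X n @^-1` [set -1]) = (1 - p)%:E].

Definition ruin {T : Type} {R : realType} (x : R) (X : nat -> T -> R) : set T :=
  [set w | exists n, wealth x (fun k => X k w) n <= 0].

(* Divide the wealth by the next bet: the level l_n = W_n / B_(n+1) - 1 starts at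
   x - 1, becomes l / 2 after a win and 2 l - 1 after a loss, and ruin means
   l_n <= -1.  Once l_n <= 1/2 it stays there, and the next two losses ruin the
   gambler, so the ruin probability is the limit in n of [hit_prob p n (x - 1)],
   the probability that the level enters (-oo, 1/2] within n rounds.  Since a win
   is never worse for hitting than a loss, [hit_prob] is nondecreasing in p.  For
   strictness, start from z in (1, 2]: a win leads to z / 2 <= 1, from where the
   level enters (-oo, 1/2] almost surely, while a loss leads to 2 z - 1 > 1, from
   where, for p < 1/2, the level escapes to +oo with positive probability, as the
   supermartingale min(1, (A / (l - 1))^beta) shows.  Larger z reduce to this case
   after a few wins, and x > 2 means x - 1 > 1. *)

From HB Require Import structures.
From mathcomp Require Import all_boot all_order all_algebra.
From mathcomp Require Import all_classical all_reals all_analysis.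
From mathcomp Require Import lra ring zify measurable_realfun.
Import Order.TTheory GRing.Theory Num.Theory.
Local Open Scope classical_set_scope.
Local Open Scope ring_scope.

Section HitProb.
Context {R : realType}.
Implicit Types (p q y z : R) (n m : nat).

Fixpoint hit_prob p n z : R :=
  if z <= 1/2 then 1 else
  match n with
  | 0 => 0
  | n'.+1 => p * hit_prob p n' (z / 2) + (1 - p) * hit_prob p n' (2 * z - 1)
  end.

Lemma hit_prob_le_half p n z : z <= 1/2 -> hit_prob p n z = 1.
Proof. by case: n => [|n] /= ->. Qed.

Lemma hit_prob0 p z : 1/2 < z -> hit_prob p 0 z = 0.
Proof. by move=> hz /=; rewrite leNgt hz. Qed.

Lemma hit_probS p n z : 1/2 < z ->
  hit_prob p n.+1 z = p * hit_prob p n (z / 2) + (1 - p) * hit_prob p n (2 * z - 1).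
Proof. by move=> hz /=; rewrite leNgt hz. Qed.

Section FixedP.
Variable p : R.
Hypothesis p01 : 0 <= p <= 1.

Lemma hit_prob_bound n z : 0 <= hit_prob p n z <= 1.
Proof.
move: p01 => /andP[p0 p1]; elim: n z => [|n IH] z.
  by rewrite /=; case: ifP => _; lra.
have [hz|hz] := lerP z (1/2); first by rewrite hit_prob_le_half //; lra.
rewrite hit_probS //.
have /andP[? ?] := IH (z / 2); have /andP[? ?] := IH (2 * z - 1).
apply/andP; split; nra.
Qed.

Lemma hit_prob_ge0 n z : 0 <= hit_prob p n z.
Proof. by have /andP[] := hit_prob_bound n z. Qed.

Lemma hit_prob_le1 n z : hit_prob p n z <= 1.
Proof. by have /andP[] := hit_prob_bound n z. Qed.

Lemma hit_prob_nonincreasing n : {homo hit_prob p n : y z /~ y <= z}.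
Proof.
move: p01 => /andP[p0 p1]; elim: n => [|n IH] z y yz;
  have [hy|hy] := lerP y (1/2); rewrite ?(hit_prob_le_half _ _ _ hy) ?hit_prob_le1 //.
  by rewrite hit_prob0 ?hit_prob_ge0 //; lra.
have hz : 1/2 < z by lra.
rewrite !hit_probS //.
have h1 : hit_prob p n (z / 2) <= hit_prob p n (y / 2) by apply: IH; lra.
have h2 : hit_prob p n (2 * z - 1) <= hit_prob p n (2 * y - 1) by apply: IH; lra.
nra.
Qed.

Lemma hit_prob_loss_le_win n z : 1/2 < z -> hit_prob p n (2 * z - 1) <= hit_prob p n (z / 2).
Proof.
move=> hz; have [h|h] := lerP (2/3) z; first by apply: hit_prob_nonincreasing; lra.
by rewrite (hit_prob_le_half _ _ _ (_ : z / 2 <= 1/2)) ?hit_prob_le1 //; lra.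
Qed.

Lemma hit_prob_nondecreasing z : {homo hit_prob p ^~ z : n m / (n <= m)%N >-> n <= m}.
Proof.
have step n y : hit_prob p n y <= hit_prob p n.+1 y.
  move: p01 => /andP[p0 p1]; elim: n y => [|n IH] y.
    have [hy|hy] := lerP y (1/2); first by rewrite !hit_prob_le_half.
    by rewrite hit_prob0 // hit_prob_ge0.
  have [hy|hy] := lerP y (1/2); first by rewrite !hit_prob_le_half.
  rewrite (hit_probS _ n.+1) // (hit_probS _ n) //.
  have := IH (y / 2); have := IH (2 * y - 1); nra.
by move=> n m /subnKC <-; elim: (m - n)%N => [|k IH]; rewrite ?addn0 // addnS (le_trans IH).
Qed.

(* From [z <= 1] a win reaches [z/2 <= 1/2] and a loss keeps [2z - 1 <= 1]. *)
Lemma hit_prob_ge_of_le1 n z : z <= 1 -> 1 - (1 - p) ^+ n <= hit_prob p n z.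
Proof.
move: p01 => /andP[p0 p1]; elim: n z => [|n IH] z hz.
  by rewrite expr0 subrr hit_prob_ge0.
have [h|h] := lerP z (1/2).
  by rewrite hit_prob_le_half // gerBl exprn_ge0 // subr_ge0.
rewrite hit_probS // hit_prob_le_half; last lra.
have := IH (2 * z - 1) ltac:(lra); rewrite exprS; nra.
Qed.

End FixedP.

Lemma hit_probS_sub p q n z : 1/2 < z ->
  hit_prob q n.+1 z - hit_prob p n.+1 z =
    q * (hit_prob q n (z / 2) - hit_prob p n (z / 2))
  + (1 - q) * (hit_prob q n (2 * z - 1) - hit_prob p n (2 * z - 1))
  + (q - p) * (hit_prob p n (z / 2) - hit_prob p n (2 * z - 1)).
Proof. by move=> hz; rewrite !hit_probS //; ring. Qed.

Lemma hit_prob_homo_p p q n z : 0 <= p -> p <= q -> q <= 1 ->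
  hit_prob p n z <= hit_prob q n z.
Proof.
move=> p0 pq q1; elim: n z => [//|n IH] z.
have [hz|hz] := lerP z (1/2); first by rewrite !hit_prob_le_half.
rewrite -subr_ge0 hit_probS_sub //.
have p01 : 0 <= p <= 1 by apply/andP; lra.
have := hit_prob_loss_le_win _ p01 n _ hz; have := IH (z / 2); have := IH (2 * z - 1).
by move=> *; rewrite !addr_ge0 // mulr_ge0 //; lra.
Qed.

End HitProb.

Section Escape.
Context {R : realType}.
Implicit Types (p A beta S v y : R).

Lemma hit_prob_le_superharmonic p (psi : R -> R) : 0 <= p <= 1 ->
  (forall y, 0 <= psi y) -> (forall y, y <= 1/2 -> 1 <= psi y) ->
  (forall y, 1/2 < y -> p * psi (y / 2) + (1 - p) * psi (2 * y - 1) <= psi y) ->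
  forall n y, hit_prob p n y <= psi y.
Proof.
move=> /andP[p0 p1] psi0 psi1 super; elim=> [|n IH] y;
  have [hy|hy] := lerP y (1/2); rewrite ?(hit_prob_le_half _ _ _ hy) ?psi1 //.
  by rewrite hit_prob0.
rewrite hit_probS //; apply: le_trans (super y hy).
by rewrite lerD // ler_wpM2l // subr_ge0.
Qed.

(* [2 `^ beta = 1 / (2 p)] and [S `^ beta = 2 (1 - 2 p (1 - p))], which exceeds 1
   because [(1 - 2 p)^2 > 0]. *)
Lemma exists_escape_exponent p : 0 < p < 1/2 ->
  exists beta S, [/\ 0 < beta, 1 < S & p * (2 * S) `^ beta + (1 - p) / 2 `^ beta = 1].
Proof.
move=> /andP[p0 ph].
have l2 : 0 < ln (2 : R) by rewrite ln_gt0 //; lra.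
pose beta := ln (2 * p)^-1 / ln 2.
have beta0 : 0 < beta by rewrite divr_gt0 // ln_gt0 // invf_gt1; lra.
have pow2 : 2 `^ beta = (2 * p)^-1.
  by rewrite /powR gt_eqF // /beta divfK ?gt_eqF // lnK // posrE invr_gt0; lra.
pose s := 2 * (1 - 2 * p * (1 - p)).
have s1 : 1 < s by rewrite /s; nra.
exists beta, (s `^ beta^-1); split => //.
  by rewrite /powR gt_eqF ?expR_gt1 ?mulr_gt0 ?invr_gt0 ?ln_gt0 //; nra.
rewrite powRM ?powR_ge0 // -powRrM mulVf ?gt_eqF // powRr1 ?pow2; last lra.
by rewrite /s; field; rewrite gt_eqF.
Qed.

Definition escape_fn A beta v : R := if A <= v then (A / v) `^ beta else 1.

Lemma escape_fn_ge0 A beta v : 0 <= escape_fn A beta v.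
Proof. by rewrite /escape_fn; case: ifP; rewrite ?powR_ge0. Qed.

Lemma escape_fn_le1 A beta v : 0 < A -> 0 <= beta -> escape_fn A beta v <= 1.
Proof.
rewrite /escape_fn => A0 beta0; case: ifPn => // Av.
rewrite -[leRHS](powRr0 (A / v)); apply: ger_powR beta0.
by rewrite divr_gt0 ?ler_pdivrMr ?mul1r //=; lra.
Qed.

Lemma escape_fn_le_pow A beta v : 0 <= beta -> 0 < v -> escape_fn A beta v <= (A / v) `^ beta.
Proof.
rewrite /escape_fn => beta0 v0; case: ifPn => //; rewrite -ltNge => vA.
rewrite -[leLHS](powRr0 (A / v)); apply: ler_powR beta0.
by rewrite ler_pdivlMr ?mul1r //; lra.
Qed.

(* A win maps [v] to [(v - 1) / 2 >= v / (2 S)] once [v >= A], a loss maps it to [2 v]. *)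
Lemma escape_fn_superharmonic p A beta S v : 0 <= p <= 1 -> 0 < beta -> 1 < S ->
  p * (2 * S) `^ beta + (1 - p) / 2 `^ beta = 1 -> S / (S - 1) <= A ->
  p * escape_fn A beta ((v - 1) / 2) + (1 - p) * escape_fn A beta (2 * v) <= escape_fn A beta v.
Proof.
move=> /andP[p0 p1] beta0 S1 harm SA.
have A1 : 1 < A by apply: lt_le_trans SA; rewrite ltr_pdivlMr; lra.
rewrite {3}/escape_fn; case: ifPn => [Av|_]; last first.
  apply: (@le_trans _ _ (p * 1 + (1 - p) * 1)); last lra.
  by apply: lerD; apply: ler_wpM2l; rewrite ?escape_fn_le1 //; lra.
set T := (A / v) `^ beta.
have v0 : 0 < v by lra.
have slack : v <= S * (v - 1) by move: SA; rewrite ler_pdivrMr; nra.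
have win : escape_fn A beta ((v - 1) / 2) <= (2 * S) `^ beta * T.
  apply: (le_trans (escape_fn_le_pow _ _ _ (ltW beta0) _)); first lra.
  rewrite -powRM; [|lra|by rewrite divr_ge0; lra].
  apply: ge0_ler_powR; rewrite ?nnegrE; try lra.
  - by rewrite divr_ge0; lra.
  - by rewrite !mulr_ge0 ?invr_ge0 //; lra.
  rewrite (_ : 2 * S * (A / v) = 2 * A / (v - 1) * (S * (v - 1) / v)); last by field; lra.
  rewrite (_ : A / ((v - 1) / 2) = 2 * A / (v - 1)); last by field; lra.
  by rewrite ler_peMr ?divr_ge0 ?ler_pdivlMr ?mul1r //; lra.
have loss : escape_fn A beta (2 * v) = T / 2 `^ beta.
  rewrite /escape_fn ifT; last lra.
  have -> : T = 2 `^ beta * (A / (2 * v)) `^ beta.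
    by rewrite /T -powRM ?divr_ge0 //; try lra; congr (_ `^ _); field; lra.
  by field; rewrite gt_eqF // powR_gt0.
rewrite loss -[leRHS]mul1r -[X in X * T]harm [leRHS]mulrDl.
apply: lerD; first by rewrite -mulrA ler_wpM2l //; lra.
by rewrite mulrA [leRHS]mulrAC.
Qed.

Lemma hit_prob_escape p : 0 < p < 1/2 ->
  exists Y c, [/\ 1 < Y, 0 < c & forall n y, Y <= y -> hit_prob p n y <= 1 - c].
Proof.
move=> hp; have [beta [S [beta0 S1 harm]]] := exists_escape_exponent p hp.
have /andP[p0 ph] := hp; have p01 : 0 <= p <= 1 by apply/andP; lra.
pose A := S / (S - 1); have A1 : 1 < A by rewrite /A ltr_pdivlMr; lra.
have one_pow : 1 `^ beta = 1 :> R by rewrite powR1.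
exists (A + 2), (1 - (A / (A + 1)) `^ beta); split; first lra.
  rewrite subr_gt0 -[ltRHS]one_pow; apply: gt0_ltr_powR; rewrite ?nnegrE //.
  - by rewrite divr_ge0; lra.
  - by rewrite ltr_pdivrMr; lra.
move=> n y hy; rewrite opprB addrC subrK.
pose psi y := escape_fn A beta (y - 1).
apply: (@le_trans _ _ (psi y)); first apply: hit_prob_le_superharmonic => //.
- by move=> z; exact: escape_fn_ge0.
- by move=> z hz; rewrite /psi /escape_fn ifF //; apply/negbTE; rewrite -ltNge; lra.
- move=> z _; rewrite /psi (_ : z / 2 - 1 = (z - 1 - 1) / 2); last lra.
  rewrite (_ : 2 * z - 1 - 1 = 2 * (z - 1)); last lra.
  exact: (escape_fn_superharmonic _ _ _ _ _ p01 beta0 S1 harm (lexx _)).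
rewrite /psi /escape_fn ifT; last lra.
apply: ge0_ler_powR; rewrite ?nnegrE ?divr_ge0 //; try lra.
by rewrite ler_pM2l ?lef_pV2 ?posrE //; lra.
Qed.

End Escape.

Section Gap.
Context {R : realType}.
Implicit Types (p q y z c : R).

Lemma exists_exp2_ge (t : R) : exists k, t <= 2 ^+ k.
Proof.
exists (Num.bound `|t|); apply: le_trans (ler_norm t) _.
apply: le_trans (ltW (archi_boundP (normr_ge0 t))) _.
by rewrite -natrX ler_nat; apply/ltnW/ltn_expl.
Qed.

Lemma hit_prob_loss_bound p y c : 0 <= p <= 1 -> 1/2 < y -> 0 <= c ->
  (forall n, hit_prob p n (2 * y - 1) <= 1 - c) ->
  forall n, hit_prob p n y <= 1 - (1 - p) * c.
Proof.
move=> p01 hy c0 hc; have /andP[p0 p1] := p01.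
case=> [|n]; last first.
  by rewrite hit_probS //; have := hit_prob_le1 _ p01 n (y / 2); have := hc n; nra.
rewrite hit_prob0 //.
by have := hc 0%N; have := hit_prob_ge0 _ p01 0 (2 * y - 1); nra.
Qed.

Lemma hit_prob_lt1 p y : 0 < p < 1/2 -> 1 < y ->
  exists2 c, 0 < c & forall n, hit_prob p n y <= 1 - c.
Proof.
move=> hp; have [Y [c0 [Y1 c00 hY]]] := hit_prob_escape p hp.
have /andP[p0 ph] := hp; have p01 : 0 <= p <= 1 by apply/andP; lra.
move=> hy; have [k] := exists_exp2_ge ((Y - 1) / (y - 1)).
elim: k y hy => [|k IH] y hy hk.
  by exists c0 => // n; apply: hY; move: hk; rewrite expr0 ler_pdivrMr; lra.
have hk' : (Y - 1) / (2 * y - 1 - 1) <= 2 ^+ k.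
  rewrite (_ : (Y - 1) / (2 * y - 1 - 1) = (Y - 1) / (y - 1) / 2); last by field; lra.
  by rewrite ler_pdivrMr // -exprSr.
have [|c c_gt0 hc] := IH _ _ hk'; first lra.
exists ((1 - p) * c); first by rewrite mulr_gt0 //; lra.
by apply: hit_prob_loss_bound => //; [lra | exact: ltW].
Qed.

Definition hit_prob_gap p q z :=
  exists2 delta, 0 < delta & \forall n \near \oo, hit_prob p n z + delta <= hit_prob q n z.

Lemma hit_probS_sub_ge p q n z : 0 <= p -> p <= q -> q <= 1 -> 1/2 < z ->
  q * (hit_prob q n (z / 2) - hit_prob p n (z / 2))
  + (q - p) * (hit_prob p n (z / 2) - hit_prob p n (2 * z - 1))
  <= hit_prob q n.+1 z - hit_prob p n.+1 z.
Proof.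
move=> p0 pq q1 hz; rewrite hit_probS_sub // addrAC lerDl mulr_ge0 ?subr_ge0 //.
exact: hit_prob_homo_p.
Qed.

Lemma hit_prob_gap_halve p q z : 0 <= p -> p < q -> q <= 1 -> 1/2 < z ->
  hit_prob_gap p q (z / 2) -> hit_prob_gap p q z.
Proof.
move=> p0 pq q1 hz [delta delta0 [N _ hN]].
exists (q * delta); first by rewrite mulr_gt0 //; lra.
exists N.+1 => // [[|n]] // /hN hn.
have p01 : 0 <= p <= 1 by apply/andP; lra.
have hsub := hit_probS_sub_ge p q n z p0 (ltW pq) q1 hz.
have ba := hit_prob_loss_le_win _ p01 n _ hz.
have h1 : q * delta <= q * (hit_prob q n (z / 2) - hit_prob p n (z / 2)).
  by rewrite ler_wpM2l //; lra.
have h2 : 0 <= (q - p) * (hit_prob p n (z / 2) - hit_prob p n (2 * z - 1)).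
  by rewrite mulr_ge0 //; lra.
lra.
Qed.

(* A win from [z] leads to [z / 2 <= 1], from where the level surely reaches [1/2]
   eventually, and a loss to [2 z - 1 > 1], from where it may escape; raising [p]
   moves probability from the second case to the first. *)
Lemma hit_prob_gap_near_one p q z : 0 < p -> p < q -> q < 1/2 -> 1 < z <= 2 ->
  hit_prob_gap p q z.
Proof.
move=> p0 pq qh /andP[z1 z2].
have p01 : 0 <= p <= 1 by apply/andP; lra.
have hp : 0 < p < 1/2 by apply/andP; lra.
have hz : 1 < 2 * z - 1 by lra.
have [c c0 hc] := hit_prob_lt1 p (2 * z - 1) hp hz.
have p1 : `|1 - p| < 1 by rewrite ger0_norm; lra.
have c2 : 0 < c / 2 by lra.
have [N _ hN] := cvgr0_norm_le _ (cvg_expr p1) _ c2.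
exists ((q - p) * (c / 2)); first by rewrite mulr_gt0 // subr_gt0.
exists N.+1 => // [[|n]] // /hN; rewrite ger0_norm ?exprn_ge0 ?subr_ge0 //; last lra.
move=> hn; rewrite -lerBrDl.
have q1 : q <= 1 by lra.
have hsub := hit_probS_sub_ge p q n z (ltW p0) (ltW pq) q1 ltac:(lra).
have ha := hit_prob_ge_of_le1 _ p01 n (z / 2) ltac:(lra).
have hb := hc n.
have h1 : 0 <= q * (hit_prob q n (z / 2) - hit_prob p n (z / 2)).
  by rewrite mulr_ge0 ?subr_ge0 ?hit_prob_homo_p //; lra.
have h2 : (q - p) * (c / 2) <= (q - p) * (hit_prob p n (z / 2) - hit_prob p n (2 * z - 1)).
  by rewrite ler_wpM2l //; lra.
lra.
Qed.

Lemma hit_prob_gap_gt1 p q z : 0 < p -> p < q -> q < 1/2 -> 1 < z -> hit_prob_gap p q z.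
Proof.
move=> p0 pq qh; have [k] := exists_exp2_ge z.
elim: k z => [|k IH] z hk hz; first by rewrite expr0 in hk; lra.
have [z2|z2] := lerP z 2; first by apply: hit_prob_gap_near_one => //; apply/andP.
apply: hit_prob_gap_halve; try lra.
by apply: IH; [rewrite ler_pdivrMr // -exprSr | lra].
Qed.

End Gap.

Section Level.
Context {R : realType}.
Implicit Types (x c : R) (s : nat -> R).

Definition bet x s n : R := (bet_state x s n).2.

Definition level x s n : R := wealth x s n / bet x s n - 1.

Lemma bet_gt0 x s n : 0 < bet x s n.
Proof.
elim: n => [|n IH]; first exact: ltr01.
by rewrite /bet /= mulr_gt0 // powR_gt0.
Qed.

Lemma eq_bet_state x s s' n : (forall i, (i < n)%N -> s i = s' i) ->
  bet_state x s n = bet_state x s' n.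
Proof.
elim: n => [//|n IH] ss' /=.
by rewrite IH ?ss' // => i /ltnW; exact: ss'.
Qed.

Lemma eq_level x s s' n : (forall i, (i < n)%N -> s i = s' i) -> level x s n = level x s' n.
Proof. by move=> ss'; rewrite /level /wealth /bet (eq_bet_state x s s' n ss'). Qed.

Lemma level0 x s : level x s 0 = x - 1.
Proof. by rewrite /level /wealth /bet /= divr1. Qed.

Lemma level_win x s n : s n = 1 -> level x s n.+1 = level x s n / 2.
Proof.
move=> sn; rewrite /level /wealth /bet /= sn powRr1 ?ler0n // mul1r.
by field; rewrite gt_eqF ?bet_gt0.
Qed.

Lemma level_loss x s n : s n = -1 -> level x s n.+1 = 2 * level x s n - 1.
Proof.
move=> sn; rewrite /level /wealth /bet /= sn powR_inv1 ?ler0n //.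
by field; rewrite gt_eqF ?bet_gt0.
Qed.

Lemma level_leE x s n c : (level x s n <= c) = (wealth x s n <= (c + 1) * bet x s n).
Proof. by rewrite /level lerBlDr -ler_pdivrMr ?bet_gt0 // mulrC. Qed.

Lemma level_le_stable {x s c k m} : 0 <= c <= 1 -> (k <= m)%N ->
  (forall j, (k <= j < m)%N -> s j = 1 \/ s j = -1) ->
  level x s k <= c -> level x s m <= c.
Proof.
move=> /andP[c0 c1] /subnKC <-; elim: (m - k)%N => [|n IH] hs hk; first by rewrite addn0.
have IH' : level x s (k + n) <= c.
  by apply: IH => // j hj; apply: hs; lia.
rewrite addnS; have [] := hs (k + n)%N; first lia.
- by move=> /level_win ->; have [l0|l0] := lerP 0 (level x s (k + n)); lra.
- by move=> /level_loss ->; lra.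
Qed.

Lemma wealth_le0_of_two_losses {x s k j1 j2} : level x s k <= 1/2 -> (k <= j1 < j2)%N ->
  (forall j, (k <= j <= j2)%N -> s j = 1 \/ s j = -1) -> s j1 = -1 -> s j2 = -1 ->
  wealth x s j2.+1 <= 0.
Proof.
move=> hk /andP[kj1 j12] hs s1 s2.
have l1 : level x s j1 <= 1/2.
  apply: (level_le_stable _ kj1 _ hk); first by apply/andP; lra.
  by move=> j hj; apply: hs; lia.
have l1' : level x s j1.+1 <= 0 by rewrite level_loss //; lra.
have l2 : level x s j2 <= 0.
  apply: (level_le_stable _ j12 _ l1'); first by apply/andP; lra.
  by move=> j hj; apply: hs; lia.
have : level x s j2.+1 <= -1 by rewrite level_loss //; lra.
by rewrite level_leE addNr mul0r.
Qed.

End Level.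

Section RuinProbability.
Context {d : measure_display} {T : measurableType d} {R : realType}.
Variables (P : probability T R) (X : nat -> T -> R) (p x : R).
Hypothesis hX : iid_pm1 P X p.

Let measurable_X k : measurable_fun setT (X k).
Proof. by case: hX. Qed.

Let P_X1 k : P (X k @^-1` [set 1]) = p%:E.
Proof. by case: hX. Qed.

Let P_Xm1 k : P (X k @^-1` [set -1]) = (1 - p)%:E.
Proof. by case: hX. Qed.

Let P_bigcap n (A : nat -> set R) : (forall i, measurable (A i)) ->
  P (\bigcap_(i in `I_n) X i @^-1` A i) = (\prod_(i < n) P (X i @^-1` A i))%E.
Proof. by case: hX => _ + _ _; apply. Qed.

Lemma measurable_preimage_X k A : measurable A -> measurable (X k @^-1` A).
Proof. by move=> mA; rewrite -[_ @^-1` _]setTI; exact: measurable_X. Qed.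

Lemma P_Xpm1 k : P (X k @^-1` [set 1] `|` X k @^-1` [set -1]) = 1%E.
Proof.
rewrite measureU; try by apply: measurable_preimage_X; exact: measurable_set1.
  (* [rewrite P_X1] fails here: [measureU] views [P] through the content coercion. *)
  transitivity (p%:E + (1 - p)%:E)%E; first by congr (_ + _)%E; [exact: P_X1|exact: P_Xm1].
  by rewrite -EFinD addrC subrK.
by apply/seteqP; split => w // [/= ->]; lra.
Qed.

Lemma P_split k E : measurable E ->
  (P E = P (E `&` X k @^-1` [set 1%R]) + P (E `&` X k @^-1` [set (-1)%R]))%E.
Proof.
move=> mE; have mS c : measurable (X k @^-1` [set c]).
  by apply: measurable_preimage_X; exact: measurable_set1.
have PU := P_Xpm1 k; set U := _ `|` _ in PU.
have mU : measurable U by exact: measurableU.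
have E0 : P (E `\` U) = 0%E.
  have PC : P (~` U) = 0%E by rewrite probability_setC // PU subee.
  exact: (subset_measure0 (measurableD mE mU) (measurableC mU) _ PC) => w [].
transitivity (P (E `\` U) + P (E `&` U))%E; first exact: measureDI.
rewrite E0 add0e setIUr measureU //; try exact: measurableI.
by rewrite setIACA setIid; apply/seteqP; split => w // [_ [/= ->]]; lra.
Qed.

Definition cylinder k (s : nat -> R) := [set w | forall i, (i < k)%N -> X i w = s i].

Lemma cylinderE k s : cylinder k s = \bigcap_(i in `I_k) X i @^-1` [set s i].
Proof. by apply/seteqP; split => w /= h i; apply: h. Qed.

Lemma cylinder0 s : cylinder 0 s = setT.
Proof. by apply/seteqP; split => w // _ []. Qed.

Lemma cylinderS k s : cylinder k.+1 s = cylinder k s `&` X k @^-1` [set s k].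
Proof.
apply/seteqP; split => w /=; first by move=> h; split => [i ik|]; apply: h; lia.
by move=> [h1 h2] i; rewrite ltnS leq_eqVlt => /predU1P[->|] //; exact: h1.
Qed.

Lemma eq_cylinder k s s' : (forall i, (i < k)%N -> s i = s' i) ->
  cylinder k s = cylinder k s'.
Proof.
by move=> ss'; apply/seteqP; split => w h i ik; [rewrite -ss' // | rewrite ss' //]; exact: h.
Qed.

Lemma measurable_cylinder k s : measurable (cylinder k s).
Proof.
rewrite cylinderE; apply: bigcap_measurableType => i _.
by apply: measurable_preimage_X; exact: measurable_set1.
Qed.

Lemma P_cylinderS k s : P (cylinder k.+1 s) = (P (cylinder k s) * P (X k @^-1` [set s k]))%E.
Proof. by rewrite !cylinderE !P_bigcap ?big_ord_recr // => i; exact: measurable_set1. Qed.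

Lemma level_cylinder {k s w} : cylinder k s w -> level x (X^~ w) k = level x s k.
Proof. by move=> h; apply: eq_level => i /h. Qed.

Lemma measurable_bet_state k :
  measurable_fun setT (fun w => (bet_state x (X^~ w) k).1) /\
  measurable_fun setT (fun w => (bet_state x (X^~ w) k).2).
Proof.
elim: k => [|k [m1 m2]]; first by split; exact: measurable_cst.
split; first by apply: measurable_funD => //; exact: measurable_funM.
by apply: measurable_funM => //; apply: measurableT_comp => //; exact: measurable_powRr.
Qed.

Lemma measurable_level_le k c : measurable [set w | level x (X^~ w) k <= c].
Proof.
have [m1 m2] := measurable_bet_state k.
under eq_set => w do rewrite level_leE.
rewrite -[X in measurable X]setTI.
exact: measurable_fun_le m1 (measurable_funM (measurable_cst _) m2).
Qed.

Definition hit k := [set w | level x (X^~ w) k <= 1/2].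

Fixpoint hit_within k n := if n is n'.+1 then hit k `|` hit_within k.+1 n' else hit k.

Lemma hit_withinP k n w : hit_within k n w <-> exists2 j, (j <= n)%N & hit (k + j) w.
Proof.
elim: n k => [|n IH] k /=.
  by split=> [h|[j]]; [exists 0%N; rewrite ?addn0 | rewrite leqn0 => /eqP ->; rewrite addn0].
split.
  case=> [h|/IH[j jn h]]; first by exists 0%N; rewrite ?addn0.
  by exists j.+1; rewrite // addnS.
case=> [[|j] jn h]; first by left; rewrite addn0 in h.
by right; apply/IH; exists j; rewrite // addSnnS.
Qed.

Lemma measurable_hit_within k n : measurable (hit_within k n).
Proof.
elim: n k => [|n IH] k; first exact: measurable_level_le.
by apply: measurableU; [exact: measurable_level_le | exact: IH].
Qed.

Lemma hit_cylinder {k s w} : cylinder k s w -> hit k w = (level x s k <= 1/2).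
Proof. by move=> /level_cylinder; rewrite /hit /= => ->. Qed.

Lemma P_cylinder_hit_within n k s :
  P (cylinder k s `&` hit_within k n) = (P (cylinder k s) * (hit_prob p n (level x s k))%:E)%E.
Proof.
elim: n k s => [|n IH] k s.
all: have [hk|hk] := lerP (level x s k) (1/2).
- by rewrite hit_prob_le_half // mule1 setIidl // => w /hit_cylinder h /=; rewrite h.
- rewrite hit_prob0 // mule0 -(measure0 P); congr (P _).
  by apply/seteqP; split => w // [/hit_cylinder h]; rewrite /= h; lra.
- by rewrite hit_prob_le_half // mule1 setIidl // => w /hit_cylinder h; left; rewrite h.
rewrite hit_probS //.
have -> : cylinder k s `&` hit_within k n.+1 = cylinder k s `&` hit_within k.+1 n.
  apply/seteqP; split => w [wC]; last by split => //; right.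
  by case=> [|h]; [rewrite (hit_cylinder wC); lra | split].
pose upd c i := if i == k then c else s i.
have upd_k c : upd c k = c by rewrite /upd eqxx.
have cylinder_upd c : cylinder k (upd c) = cylinder k s.
  by apply: eq_cylinder => i /ltn_eqF; rewrite /upd => ->.
have upd_cylinder c : cylinder k s `&` X k @^-1` [set c] = cylinder k.+1 (upd c).
  by rewrite cylinderS cylinder_upd upd_k.
have P_upd c : P (cylinder k s `&` hit_within k.+1 n `&` X k @^-1` [set c]) =
    (P (cylinder k s) * P (X k @^-1` [set c]) * (hit_prob p n (level x (upd c) k.+1))%:E)%E.
  by rewrite setIAC upd_cylinder IH P_cylinderS cylinder_upd upd_k.
have level_upd c : level x (upd c) k = level x s k.
  by apply: eq_level => i /ltn_eqF; rewrite /upd => ->.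
rewrite (P_split k); last by apply: measurableI; [exact: measurable_cylinder | exact: measurable_hit_within].
rewrite !P_upd level_win ?upd_k // level_loss ?upd_k // !level_upd P_X1 P_Xm1.
rewrite -(fineK (fin_num_measure P _ (measurable_cylinder k s))) -!EFinM -EFinD.
by congr EFin; ring.
Qed.

Lemma P_hit_within n : P (hit_within 0 n) = (hit_prob p n (x - 1))%:E.
Proof.
have := P_cylinder_hit_within n 0 (fun=> 0).
by rewrite cylinder0 setTI probability_setT mul1e level0.
Qed.

Lemma ruinE : ruin x X = \bigcup_n [set w | level x (X^~ w) n <= -1].
Proof.
apply/seteqP; split => w [n]; first by move=> h; exists n; rewrite //= level_leE addNr mul0r.
by move=> _; rewrite /= level_leE addNr mul0r; exists n.
Qed.

Lemma measurable_ruin : measurable (ruin x X).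
Proof. by rewrite ruinE; apply: bigcupT_measurable => n; exact: measurable_level_le. Qed.

Lemma P_ruin_le c : (forall n, hit_prob p n (x - 1) <= c) -> (P (ruin x X) <= c%:E)%E.
Proof.
move=> hc; set H := fun n => hit_within 0 n.
have mH n : measurable (H n) := measurable_hit_within 0 n.
have mU : measurable (\bigcup_n H n) by exact: bigcupT_measurable.
have ndH : {homo H : n m / (n <= m)%N >-> (n <= m)%O}.
  move=> n m nm; apply/subsetPset => w /hit_withinP[j jn hj].
  by apply/hit_withinP; exists j => //; exact: leq_trans nm.
have cvgH := nondecreasing_cvg_mu (mu := P) mH mU ndH.
apply: (@le_trans _ _ (P (\bigcup_n H n))).
  apply: le_measure; rewrite ?inE //; first exact: measurable_ruin.
  move=> w; rewrite ruinE => -[n _ /= hn]; exists n => //; apply/hit_withinP; exists n => //.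
  by rewrite /hit /= add0n; lra.
rewrite -(cvg_lim _ cvgH) //; apply: lime_le; first exact: cvgP cvgH.
by apply: nearW => n; rewrite /= P_hit_within lee_fin.
Qed.

Definition wins k m := [set w | forall j, (k <= j < k + m)%N -> X j w = 1].

Definition signed N := [set w | forall j, (j < N)%N -> X j w = 1 \/ X j w = -1].

Lemma winsE k m :
  wins k m = \bigcap_(j in `I_(k + m)) X j @^-1` (if (k <= j)%N then [set 1] else setT).
Proof.
apply/seteqP; split => w h j /=; first by case: ifP => // kj jkm; apply: h; rewrite kj.
by move=> /andP[kj jkm]; have := h j jkm; rewrite /= kj.
Qed.

Lemma measurable_wins k m : measurable (wins k m).
Proof.
rewrite winsE; apply: bigcap_measurableType => j _.
by apply: measurable_preimage_X; case: ifP => _ //; exact: measurable_set1.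
Qed.

Lemma P_wins k m : P (wins k m) = (p ^+ m)%:E.
Proof.
rewrite winsE P_bigcap; last by move=> j; case: ifP => _ //; exact: measurable_set1.
rewrite (eq_bigr (fun j : 'I__ => (if (k <= j)%N then p else 1)%:E)); last first.
  by move=> j _; case: ifP => _; [exact: P_X1 | rewrite preimage_setT probability_setT].
rewrite prodEFin -(big_mkord xpredT (fun j => if (k <= j)%N then p else 1)).
rewrite (big_cat_nat _ (leq_addr m k)) //= big_nat_cond big1 ?mul1r; last first.
  by move=> j /andP[/andP[_ jk] _]; rewrite leqNgt jk.
rewrite big_nat_cond (eq_bigr (fun=> p)) => [|j /andP[/andP[->]]] //.
by rewrite -big_nat_cond prodr_const_nat addKn.
Qed.

Lemma signedE N : signed N = \bigcap_(j in `I_N) X j @^-1` ([set 1] `|` [set -1]).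
Proof. by apply/seteqP; split => w h j /h. Qed.

Lemma measurable_signed N : measurable (signed N).
Proof.
rewrite signedE; apply: bigcap_measurableType => j _; apply: measurable_preimage_X.
by apply: measurableU; exact: measurable_set1.
Qed.

Lemma P_not_signed N : P (~` signed N) = 0%E.
Proof.
rewrite probability_setC; last exact: measurable_signed.
rewrite signedE P_bigcap => [|j]; last by apply: measurableU; exact: measurable_set1.
by rewrite big1 ?subee // => j _; rewrite preimage_setU P_Xpm1.
Qed.

Lemma exists_loss k m w : (forall j, (k <= j < k + m)%N -> X j w = 1 \/ X j w = -1) ->
  ~ wins k m w -> exists j, (k <= j < k + m)%N /\ X j w = -1.
Proof.
move=> hs; apply: contra_notP => nolose j hj.
by have [//|hm] := hs j hj; exfalso; apply: nolose; exists j.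
Qed.

Lemma hit_within_sub_ruin n m :
  hit_within 0 n `<=` ruin x X `|` ~` signed (n + m + m) `|` wins n m `|` wins (n + m) m.
Proof.
move=> w /hit_withinP[k kn]; rewrite /hit /= add0n => hk.
have [ws|] := pselect (signed (n + m + m) w); last by left; left; right.
have [|/exists_loss[|j1 [hj1 X1]]] := pselect (wins n m w); first by left; right.
  by move=> j hj; apply: ws; lia.
have [|/exists_loss[|j2 [hj2 X2]]] := pselect (wins (n + m) m w); first by right.
  by move=> j hj; apply: ws; lia.
left; left; left; exists j2.+1; apply: (wealth_le0_of_two_losses hk _ _ X1 X2); first lia.
by move=> j hj; apply: ws; lia.
Qed.

Lemma P_ruin_ge n m : ((hit_prob p n (x - 1) - 2 * p ^+ m)%:E <= P (ruin x X))%E.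
Proof.
set A := ruin x X; set B := ~` signed (n + m + m); set C := wins n m; set D := wins (n + m) m.
have mA : measurable A := measurable_ruin.
have mB : measurable B by apply: measurableC; exact: measurable_signed.
have mC : measurable C := measurable_wins n m.
have mD : measurable D := measurable_wins (n + m) m.
have h1 : (P (hit_within 0 n) <= P (A `|` B `|` C `|` D))%E.
  apply: le_measure; rewrite ?inE; [exact: measurable_hit_within | | exact: hit_within_sub_ruin].
  by do 3 apply: measurableU => //.
have h2 : (P (A `|` B `|` C `|` D) <= P (A `|` B `|` C) + P D)%E.
  by apply: measureU2 => //; do 2 apply: measurableU => //.
have h3 : (P (A `|` B `|` C) <= P (A `|` B) + P C)%E by apply: measureU2 => //; exact: measurableU.
have h4 : (P (A `|` B) <= P A + P B)%E by exact: measureU2.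
have PA : P A = (fine (P A))%:E by rewrite fineK // fin_num_measure.
move: h1 h2 h3 h4; rewrite P_hit_within P_not_signed P_wins P_wins PA adde0 => h1 h2 h3 h4.
have : ((hit_prob p n (x - 1))%:E <= (fine (P A) + p ^+ m + p ^+ m)%:E)%E.
  apply: (le_trans h1); apply: (le_trans h2); rewrite !EFinD leeD2r //.
  by apply: (le_trans h3); rewrite leeD2r.
by rewrite !lee_fin; lra.
Qed.

End RuinProbability.

Theorem corollary1p4 (R : realType) (x p q : R) :
  2 < x -> 0 < p -> p < q -> q < 1 / 2 ->
  forall (d : measure_display) (T : measurableType d) (P : probability T R)
         (X : nat -> T -> R)
         (d' : measure_display) (T' : measurableType d') (P' : probability T' R)
         (X' : nat -> T' -> R),
    iid_pm1 P X p -> iid_pm1 P' X' q ->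
    (P (ruin x X) < P' (ruin x X'))%E.
Proof.
move=> x2 p0 pq qh d T P X d' T' P' X' hXp hXq.
have p01 : 0 <= p <= 1 by apply/andP; lra.
have [delta delta0 [N _ gap]] := hit_prob_gap_gt1 p q (x - 1) p0 pq qh ltac:(lra).
have q1 : `|q| < 1 by rewrite ger0_norm; lra.
have [m _ small] := cvgr0_norm_le _ (cvg_expr q1) (delta / 4) ltac:(lra).
have qm : q ^+ m <= delta / 4.
  by have := small m (leqnn m); rewrite ger0_norm // exprn_ge0 //; lra.
set r := fine (P' (ruin x X')).
have Pr : P' (ruin x X') = r%:E.
  by rewrite fineK // fin_num_measure //; exact: measurable_ruin hXq.
have bound n : hit_prob p n (x - 1) <= r + 2 * q ^+ m - delta.
  have := P_ruin_ge P' X' q x hXq (maxn n N) m; rewrite Pr lee_fin.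
  have := gap (maxn n N) (leq_maxr n N).
  have := hit_prob_nondecreasing p p01 (x - 1) _ _ (leq_maxl n N).
  lra.
rewrite Pr; apply: le_lt_trans (P_ruin_le P X p x hXp _ bound) _.
by rewrite lte_fin; lra.
Qed.
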